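(* A class $\mathcal V$ of Stone topological $\Omega$-algebras is a Stone variety if and only if there is a class $\Sigma$ of Stone pseudoidentities over Stonean spaces such that $\mathcal V$ is exactly the class of all Stone topological $\Omega$-algebras satisfying every member of $\Sigma$.
   Context: $\Omega=\biguplus_n\Omega_n$ is a fixed topological signature; a Stone topological $\Omega$-algebra is a compact Hausdorff 0-dimensional space $A$ with continuous evaluation maps $\Omega_n\times A^n\to A$. A Stone variety is a nonempty class of Stone topological algebras closed under images by onto continuous homomorphisms that are Stone topological algebras, closed subalgebras, and arbitrary direct products. A Stonean space is a compact Hausdorff extremally disconnected space (closure of every open set is open). For a topological space $X$, $\overline{\Omega}_X\mathcal{S}t_\Omega$ is the free Stone topological algebra over $X$: a Stone topological algebra with a continuous map $\iota$ from $X$ whose image generates a dense subalgebra, such that every continuous $\varphi:X\to S$ into a Stone topological algebra factors uniquely as $\hat\varphi\circ\iota$ with $\hat\varphi$ a continuous homomorphism. A Stone pseudoidentity over $X$ is a pair $(u,v)$ of elements of $\overline{\Omega}_X\mathcal{S}t_\Omega$, written $u=v$; a Stone topological algebra $S$ satisfies it if $\hat\varphi(u)=\hat\varphi(v)$ for every continuous map $\varphi:X\to S$. A Stone pseudoidentity over a Stonean space is one over some Stonean space $X$; $\Sigma$ may be a proper class and may involve different spaces $X$. *)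

From HB Require Import structures.
From mathcomp Require Import all_boot all_order all_algebra.
From mathcomp Require Import all_classical all_reals all_analysis.

Set Implicit Arguments.
Unset Strict Implicit.
Unset Printing Implicit Defensive.

Local Open Scope classical_set_scope.

(* A topological signature: Omega = disjoint union of the spaces Omega_n,
   Omega_n being the topological space of n-ary operation symbols. *)
Definition tsig := nat -> topologicalType.

Record topAlg (Om : tsig) := TopAlg {
  carrier :> topologicalType;
  op : forall n : nat, Om n -> ('I_n -> carrier) -> carrier
}.
Arguments op {Om} A n w a : rename.

Definition pow_space (T : topologicalType) (n : nat) : topologicalType :=
  prod_topology (fun _ : 'I_n => T).

Definition zero_dim (T : topologicalType) : Prop :=
  forall (U : set T) (x : T), open U -> U x ->
    exists V : set T, [/\ clopen V, V x & V `<=` U].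

Definition stone_space (T : topologicalType) : Prop :=
  [/\ compact [set: T], hausdorff_space T & zero_dim T].

Definition stonean_space (T : topologicalType) : Prop :=
  [/\ compact [set: T], hausdorff_space T &
      forall U : set T, open U -> open (closure U)].

Definition is_stone (Om : tsig) (A : topAlg Om) : Prop :=
  stone_space A /\
  forall n : nat,
    continuous (fun p : (Om n * pow_space A n)%type => op A n p.1 p.2).

Definition is_hom (Om : tsig) (A B : topAlg Om) (f : A -> B) : Prop :=
  forall (n : nat) (w : Om n) (a : 'I_n -> A), f (op A n w a) = op B n w (f \o a).

Definition op_closed (Om : tsig) (A : topAlg Om) (S : set A) : Prop :=
  forall (n : nat) (w : Om n) (a : 'I_n -> A), (forall i, S (a i)) -> S (op A n w a).

(* The subalgebra carried by an op-closed subset, with the subspace topology. *)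
Definition subAlg (Om : tsig) (A : topAlg Om) (S : set A) (HS : op_closed S)
  : topAlg Om :=
  @TopAlg Om (set_type S)
    (fun n w a => SigSub (mem_set (HS n w (fun i => set_val (a i))
                     (fun i => set_valP (a i))))).

Definition prodAlg (Om : tsig) (I : Type) (A : I -> topAlg Om) : topAlg Om :=
  @TopAlg Om (prod_topology (fun i => A i))
    (fun n w a => fun i => op (A i) n w (fun k => a k i)).

Definition stone_variety (Om : tsig) (V : topAlg Om -> Prop) : Prop :=
  [/\ (forall A, V A -> is_stone A),
      (exists A, V A),
      (forall (A B : topAlg Om) (f : A -> B),
          V A -> is_stone B -> continuous f -> is_hom f -> (forall b : B, exists a : A, f a = b) -> V B),
      (forall (A : topAlg Om) (S : set A) (HS : op_closed S),
          V A -> closed S -> V (subAlg HS)) &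
      (forall (I : Type) (A : I -> topAlg Om),
          (forall i, V (A i)) -> V (prodAlg A))].

Definition gen_sub (Om : tsig) (A : topAlg Om) (G : set A) : set A :=
  \bigcap_(S in [set S : set A | op_closed S /\ G `<=` S]) S.

Definition is_free_stone (Om : tsig) (X : topologicalType) (F : topAlg Om)
  (iota : X -> F) : Prop :=
  [/\ is_stone F, continuous iota,
      closure (gen_sub (range iota)) = [set: F] &
      forall (S : topAlg Om) (phi : X -> S), is_stone S -> continuous phi ->
        exists! h : F -> S, [/\ continuous h, is_hom h & h \o iota = phi]].

Record stonean_pseudoid (Om : tsig) := StoneanPseudoid {
  pi_space : topologicalType;
  pi_space_stonean : stonean_space pi_space;
  pi_free : topAlg Om;
  pi_iota : pi_space -> pi_free;
  pi_freeP : is_free_stone pi_iota;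
  pi_lhs : pi_free;
  pi_rhs : pi_free
}.

(* S satisfies u = v: hat(phi) u = hat(phi) v for every continuous phi : X -> S,
   hat(phi) being the continuous homomorphism with hat(phi) \o iota = phi. *)
Definition satisfies (Om : tsig) (S : topAlg Om) (e : stonean_pseudoid Om)
  : Prop :=
  forall phi : pi_space e -> S, continuous phi ->
    forall h : pi_free e -> S, continuous h -> is_hom h ->
      h \o @pi_iota Om e = phi -> h (@pi_lhs Om e) = h (@pi_rhs Om e).

From HB Require Import structures.
From mathcomp Require Import all_boot all_order all_algebra.
From mathcomp Require Import all_classical all_reals all_analysis.

(* A pseudoidentity over a Stonean space X passes to direct products and
   closed subalgebras pointwise, and to continuous onto images f : A -> B by
   Gleason's theorem: X is projective among compact Hausdorff spaces, so every
   continuous map X -> B lifts along f, and uniqueness of extensions to the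
   free algebra carries the identity from A to B.  The empty product satisfies
   every pseudoidentity, so equationally defined classes are Stone varieties.

   Conversely, let A satisfy every pseudoidentity valid in the variety V.  The
   ultrafilter space on A is Stonean and maps continuously onto A; extend this
   map to h : F -> A on the free Stone algebra F over it.  Each pair u, v with
   h u <> h v is a pseudoidentity failing in A, so some homomorphism into a
   member of V separates u and v.  The product G of these homomorphisms has a
   closed range, which lies in V, and h factors continuously through G, so A is
   an image of a member of V.

   Free Stone algebras exist because every Stone algebra topologically
   generated by an image of X has a copy carried by a set of sets of terms
   over X; in the product of all these copies, the closure of the subalgebra
   generated by the diagonal is free. *)

Set Implicit Arguments.
Unset Strict Implicit.
Unset Printing Implicit Defensive.

Local Open Scope classical_set_scope.

Lemma continuous_prod_topology (X : topologicalType) (I : Type)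
    (K : I -> topologicalType) (f : X -> prod_topology K) :
  (forall i, continuous (fun x => f x i)) -> continuous f.
Proof.
move=> cf x; apply/cvg_sup => i.
exact: (@continuous_comp_initial (prod_topology K) X (K i) (fun g => g i) f).
Qed.

Lemma prod_coord_continuous (I : Type) (K : I -> topologicalType) (i : I) :
  continuous (fun f : prod_topology K => f i).
Proof. exact: (@proj_continuous {classic I} K i). Qed.

Lemma fst_continuous (X Y : topologicalType) : continuous (@fst X Y).
Proof. by move=> p; exact: cvg_fst. Qed.

Lemma snd_continuous (X Y : topologicalType) : continuous (@snd X Y).
Proof. by move=> p; exact: cvg_snd. Qed.

Lemma pair_cst_continuous (X Y : topologicalType) (x : X) :
  continuous (fun y : Y => (x, y)).
Proof. by move=> y; apply: cvg_pair; [exact: cvg_cst | exact: cvg_id]. Qed.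

Lemma continuous_map_snd (X Y Y' : topologicalType) (h : Y -> Y') :
  continuous h -> continuous (fun p : X * Y => (p.1, h p.2)).
Proof.
move=> ch p; apply: cvg_pair; first exact: cvg_fst.
by apply: (@continuous_comp _ _ _ snd h); [exact: cvg_snd | exact: ch].
Qed.

Lemma continuous_pow_map (A B : topologicalType) (g : A -> B) n :
  continuous g -> continuous (fun a : pow_space A n => (g \o a : pow_space B n)).
Proof.
move=> cg; apply: continuous_prod_topology => k x.
by apply: (@continuous_comp _ _ _ (fun a : pow_space A n => a k) g);
  [exact: prod_coord_continuous | exact: cg].
Qed.

Section InitialTopology.
Variables (S : choiceType) (Z : topologicalType) (f : S -> Z).
Local Notation W := (initial_topology f).

Lemma initial_nbhsP (w : W) (B : set W) :
  nbhs w B <-> exists Op : set Z, [/\ open Op, Op (f w) & f @^-1` Op `<=` B].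
Proof.
split.
  by rewrite nbhsE => -[U [[Op oO <-] Uw] UB]; exists Op.
move=> [Op [oO Ow OB]]; apply: (filterS OB); apply: open_nbhs_nbhs.
by split => //; exists Op.
Qed.

Lemma initial_compact : compact (range f) -> compact [set: W].
Proof.
move=> cZ F PF _.
have Fr : F (f @^-1` range f) by apply: filterS (@filterT _ F _) => x _; exists x.
have [z [[w _ <-] clz]] := cZ (f @ F) (fmap_proper_filter f PF) Fr.
exists w; split => // A B FA /initial_nbhsP [Op [oO Ow OB]].
have fA : (f @ F) (f @` A).
  by rewrite /fmap /=; apply: filterS FA => a Aa; exists a.
have [_ [[a Aa <-] Oa]] := clz _ Op fA (open_nbhs_nbhs (conj oO Ow)).
by exists a; split => //; apply: OB.
Qed.

Hypothesis f_inj : injective f.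

Lemma initial_hausdorff : hausdorff_space Z -> hausdorff_space W.
Proof.
rewrite !open_hausdorff => hZ x y xy.
have /hZ [[U V] /= [xU yV] [oU oV /eqP UV]] : f x != f y.
  by apply: contra_neq xy => /f_inj.
exists (f @^-1` U, f @^-1` V) => /=.
  by rewrite !inE; move: xU yV; rewrite !inE.
split; [by exists U | by exists V |].
by apply/eqP; rewrite -preimage_setI UV preimage_set0.
Qed.

Lemma initial_zero_dimensional : zero_dimensional Z -> zero_dimensional W.
Proof.
move=> zZ x y xy.
have /zZ [U [cU Ux Uy]] : f x != f y by apply: contra_neq xy => /f_inj.
exists (f @^-1` U); split => //; apply: preimage_clopen cU _.
exact: initial_continuous.
Qed.

End InitialTopology.

Lemma stone_spaceE (T : topologicalType) : stone_space T <->
  [/\ compact [set: T], hausdorff_space T & zero_dimensional T].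
Proof.
split=> -[cT hT zT]; split => //.
  move=> x y xy.
  have [U [oU Ux nUy]] := hausdorff_accessible hT xy.
  rewrite !inE in Ux nUy.
  have [V [cV Vx VU]] := zT U x oU Ux.
  by exists V; split => // /VU.
move=> U x oU Ux.
have [V [Vx cV] VU] := @zero_dimensional_cvg T x hT zT cT U
  (open_nbhs_nbhs (conj oU Ux)).
by exists V.
Qed.

Lemma closed_equalizer (T B : topologicalType) (g1 g2 : T -> B) :
  hausdorff_space B -> continuous g1 -> continuous g2 ->
  closed [set z | g1 z = g2 z].
Proof.
move=> hB c1 c2 z clz; apply: hB => U V nU nV.
have N : nbhs z (g1 @^-1` U `&` g2 @^-1` V).
  by apply: filterI; [exact: c1 | exact: c2].
have [w [/= E [Uw Vw]]] := clz _ N.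
by exists (g1 w); split => //; rewrite E.
Qed.

Lemma closed_range_compact (T U : topologicalType) (g : T -> U) :
  compact [set: T] -> hausdorff_space U -> continuous g -> closed (range g).
Proof.
move=> cT hU cg; apply: compact_closed => //.
exact: continuous_compact (continuous_subspaceT _) cT.
Qed.

Lemma closed_image_fst (X Y : topologicalType) (K : set (X * Y)) :
  compact [set: X] -> compact [set: Y] -> hausdorff_space X -> closed K ->
  closed (fst @` K).
Proof.
move=> cX cY hX cK; apply: compact_closed => //.
apply: continuous_compact; first exact/continuous_subspaceT/fst_continuous.
apply: subclosed_compact cK _ (@subsetT _ K).
by rewrite -setXTT; exact: compact_setX.
Qed.

Lemma prod_stone (I : Type) (K : I -> topologicalType) :
  (forall i, stone_space (K i)) -> stone_space (prod_topology K).
Proof.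
move=> sK; apply/stone_spaceE; split.
- have cK i : compact [set: K i] by case: (sK i).
  have := @tychonoff {classic I} K (fun _ => setT) cK.
  by congr compact; rewrite predeqE.
- by apply: (@hausdorff_product {classic I}) => i; case: (sK i).
- apply: (@zero_dimension_prod {classic I}) => i.
  by have [] := (stone_spaceE (K i)).1 (sK i).
Qed.

Lemma initial_stone (S : choiceType) (Z : topologicalType) (f : S -> Z) :
  injective f -> stone_space Z -> closed (range f) ->
  stone_space (initial_topology f).
Proof.
move=> fi /stone_spaceE [cZ hZ zZ] cf; apply/stone_spaceE; split.
- exact/initial_compact/(subclosed_compact cf cZ).
- exact: initial_hausdorff.
- exact: initial_zero_dimensional.
Qed.

Lemma closure_image_continuous (T U : topologicalType) (g : T -> U)
    (D : set T) :
  continuous g -> g @` closure D `<=` closure (g @` D).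
Proof.
move=> cg _ [x clx <-] N /cg gN.
by have [y [Dy Ny]] := clx _ gN; exists (g y); split => //; exists y.
Qed.

(* The boxes of the sets (B j `&` D), with B j a neighbourhood of a j, form a
   proper filter converging to a. *)
Lemma closure_pow_box (A : topologicalType) n (D : set A) (a : pow_space A n) :
  (forall j, closure D (a j)) ->
  closure [set b : pow_space A n | forall j, D (b j)] a.
Proof.
move=> cla N nN.
pose Bx := [set Bs : 'I_n -> set A | forall j, nbhs (a j) (Bs j)].
pose box (Bs : 'I_n -> set A) : set (pow_space A n) :=
  [set b | forall j, (Bs j `&` D) (b j)].
have FF : Filter (filter_from Bx box).
  apply: filter_from_filter; first by exists (fun=> setT) => j; exact: filterT.
  move=> B1 B2 h1 h2; exists (fun j => B1 j `&` B2 j).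
    by move=> j; apply: filterI; [exact: h1 | exact: h2].
  by move=> b Hb; split => j; have [[? ?] ?] := Hb j.
have PF : ProperFilter (filter_from Bx box).
  apply: filter_from_proper => Bs HB.
  have ex j : exists x, (Bs j `&` D) x.
    by have [x [Dx Bx']] := cla j _ (HB j); exists x.
  by have [b Hb] := choice ex; exists b.
have cv : filter_from Bx box --> a.
  apply/cvg_sup => j B /initial_nbhsP [Op [oO Oa OB]].
  exists (fun i => if i == j then Op else setT).
    move=> i; case: eqP => [->|_]; last exact: filterT.
    exact: open_nbhs_nbhs.
  by move=> b Hb; apply: OB; have := Hb j; rewrite eqxx => -[].
have [Bs HBs BsN] := cv _ nN.
have [b Hb] := @filter_ex _ _ PF (box Bs) (ex_intro2 _ _ Bs HBs (fun _ h => h)).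
by exists b; split; [move=> j; have [] := Hb j | exact: BsN].
Qed.

(** * Gleason's theorem *)

Definition left_total (X A : Type) (M : set (X * A)) : Prop :=
  forall x, exists a, M (x, a).

Section MinimalLeftTotal.
Variables (X A : topologicalType) (K : set (X * A)).
Hypotheses (cA : compact [set: A]) (cK : closed K) (tK : left_total K).

Let good (M : set (X * A)) := closed M /\ left_total (M `&` K).

Lemma good_chain_bigcap (F : set (set (X * A))) :
  F `<=` (fun U => good (~` U)) -> total_on F subset ->
  good (~` \bigcup_(U in F) U).
Proof.
move=> FP tF; split.
  by rewrite setC_bigcup; apply: closed_bigI => U /FP [].
move=> x.
pose S (U : set (X * A)) := [set a | ~ U (x, a) /\ K (x, a)].
pose D := F `|` [set set0].
have Ddir U V : D U -> D V -> exists2 W, D W & S W `<=` S U `&` S V.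
  move=> DU DV.
  have [UV|VU] : U `<=` V \/ V `<=` U.
    case: DU => [FU|->]; last by left.
    by case: DV => [FV|->]; [exact: tF | right].
  - by exists V => // a [nV Ka]; do 2 split => //; move/UV.
  - by exists U => // a [nU Ka]; do 2 split => //; move/VU.
have FF := filter_from_filter (ex_intro _ set0 (or_intror erefl)) Ddir.
have PF : ProperFilter (filter_from D S).
  apply: filter_from_proper => U [FU|->].
    by have [_ /(_ x) [a [nU Ka]]] := FP U FU; exists a.
  by have [a Ka] := tK x; exists a; split.
have [a [_ cla]] := cA PF (filterS (@subsetT _ _) (@filterT _ _ FF)).
have SU U : D U -> S U a.
  move=> DU; have cS : closed (S U).
    have -> : S U = (fun a : A => (x, a)) @^-1` (~` U `&` K) by [].
    apply: (continuous_closedP _).1 (@pair_cst_continuous X A x) _ _.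
    apply: closedI => //.
    by case: DU => [/FP []//|->]; rewrite setC0; exact: closedT.
  apply: cS => N nN.
  have [b [Sb Nb]] := cla (S U) N (ex_intro2 _ _ U DU (fun _ h => h)) nN.
  by exists b.
exists a; split; last by case: (SU set0 (or_intror erefl)).
by move=> [U FU Ua]; case: (SU U (or_introl FU)).
Qed.

Lemma exists_minimal_left_total : exists M, [/\ closed M, left_total M, M `<=` K &
  forall M', closed M' -> left_total M' -> M' `<=` M -> M' = M].
Proof.
have [U0 [[cU0 tU0] maxU0]] :=
  @Zorn_bigcup (X * A) (fun U => good (~` U)) good_chain_bigcap.
have minU0 M' : good M' -> M' `<=` ~` U0 -> M' = ~` U0.
  move=> gM' sM'; apply: contrapT => neM.
  apply: (maxU0 (~` M')); last by rewrite setCK.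
  split; first by move=> p /[swap] /sM'.
  move=> E; apply: neM; apply/seteqP; split => // p Up.
  by apply: contrapT => nM; exact: Up (E _ nM).
have gI : good (~` U0 `&` K).
  split; first exact: closedI.
  by move=> x; have [a [Ma Ka]] := tU0 x; exists a.
have U0K : ~` U0 `<=` K by rewrite -(minU0 _ gI (@subIsetl _ _ _)) => p [].
exists (~` U0); split => // [x|M' cM' tM' sM'].
  by have [a [] ] := tU0 x; exists a.
apply: minU0 (sM'); split => // x.
by have [a Ma] := tM' x; exists a; split => //; apply/U0K/sM'.
Qed.

End MinimalLeftTotal.

Section MinimalRelationGraph.
Variables (X A : topologicalType) (M : set (X * A)).
Hypotheses (sX : stonean_space X) (cA : compact [set: A])
  (hA : hausdorff_space A) (cM : closed M) (tM : left_total M)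
  (minM : forall M', closed M' -> left_total M' -> M' `<=` M -> M' = M).

Let cX : compact [set: X]. Proof. by case: sX. Qed.
Let hX : hausdorff_space X. Proof. by case: sX. Qed.

Let fibre_in (G : set A) : set X := ~` (fst @` (M `&` [set p | ~ G p.2])).

Let fibre_in_open G : open G -> open (fibre_in G).
Proof.
move=> oG; rewrite openC; apply: closed_image_fst => //; apply: closedI => //.
have -> : [set p : X * A | ~ G p.2] = snd @^-1` (~` G) by [].
exact: (continuous_closedP _).1 (@snd_continuous X A) _ (open_closedC oG).
Qed.

(* Minimality: if a neighbourhood N of x missed [fibre_in G], deleting N x G
   from M would leave a smaller closed left-total relation. *)
Let fibre_in_closure G x a : open G -> M (x, a) -> G a -> closure (fibre_in G) x.
Proof.
move=> oG Ma Ga N; rewrite nbhsE => -[N' [oN' N'x] N'N].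
pose M' := M `&` ~` ((fst @^-1` N') `&` (snd @^-1` G)).
have cM' : closed M'.
  apply: closedI => //; apply: open_closedC; apply: openI.
    exact: (continuousP _).1 (@fst_continuous X A) _ oN'.
  exact: (continuousP _).1 (@snd_continuous X A) _ oG.
have [x' nx'] : exists x', ~ exists b, M' (x', b).
  apply: contrapT => H; have E : M' = M.
    apply: minM cM' _ (@subIsetl _ _ _) => y.
    by apply: contrapT => Hy; apply: H; exists y.
  have [_] : M' (x, a) by rewrite E.
  by apply; split.
have [b Mb] := tM x'.
have [N'x' Gb] : N' x' /\ G b by apply: contrapT => H; apply: nx'; exists b.
exists x'; split; last exact: N'N.
move=> [[y c] [Myc nGc] /= yx']; subst y.
by apply: nx'; exists c; split => // -[_ Gc]; exact: nGc.
Qed.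

(* Disjoint open U, U' around a, a' give disjoint [fibre_in U], [fibre_in U'];
   the closures of both contain x, and the first closure is open. *)
Let functional x a a' : M (x, a) -> M (x, a') -> a = a'.
Proof.
move=> Ma Ma'; apply: contrapT => /eqP neq.
have := hA; rewrite open_hausdorff => /(_ a a' neq).
move=> [[U U'] /= [aU aU'] [oU oU' /eqP UU']].
rewrite !inE in aU aU'.
have disj y : fibre_in U y -> fibre_in U' y -> False.
  move=> Uy U'y; have [b Mb] := tM y.
  have : (U `&` U') b.
    by split; apply: contrapT => nb; [apply: Uy | apply: U'y]; exists (y, b).
  by rewrite UU'.
have ncl : nbhs x (closure (fibre_in U)).
  by apply: open_nbhs_nbhs; split; [case: sX => _ _; apply; exact: fibre_in_open |
    exact: fibre_in_closure Ma aU].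
have [y [U'y cy]] := fibre_in_closure oU' Ma' aU' ncl.
have [z [Uz U'z]] := cy _ (open_nbhs_nbhs (conj (fibre_in_open oU') U'y)).
exact: disj Uz U'z.
Qed.

Lemma minimal_left_total_graph :
  exists psi : X -> A, continuous psi /\ forall x, M (x, psi x).
Proof.
pose psi x := projT1 (cid (tM x)).
have Mpsi x : M (x, psi x) := projT2 (cid (tM x)).
exists psi; split => //.
apply/continuous_closedP => K cK.
have -> : psi @^-1` K = fst @` (M `&` (snd @^-1` K)).
  rewrite predeqE => x; split; first by move=> Kx; exists (x, psi x).
  by move=> [[y b] [Mb Kb] /= <-]; rewrite /preimage /= (functional (Mpsi y) Mb).
apply: closed_image_fst => //; apply: closedI => //.
exact: (continuous_closedP _).1 (@snd_continuous X A) _ cK.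
Qed.

End MinimalRelationGraph.

(* The lift is the graph of a minimal closed left-total subrelation of the
   pullback {(x, a) | phi x = f a}. *)
Lemma gleason_lift (X A B : topologicalType) (f : A -> B) (phi : X -> B) :
  stonean_space X -> compact [set: A] -> hausdorff_space A ->
  hausdorff_space B -> continuous f -> (forall b, exists a, f a = b) ->
  continuous phi -> exists psi : X -> A, continuous psi /\ f \o psi = phi.
Proof.
move=> sX cA hA hB cf sf cphi.
pose K := [set p : X * A | phi p.1 = f p.2].
have cK : closed K.
  apply: (closed_equalizer hB).
    by move=> p; apply: (@continuous_comp _ _ _ fst phi);
      [exact: cvg_fst | exact: cphi].
  by move=> p; apply: (@continuous_comp _ _ _ snd f);
    [exact: cvg_snd | exact: cf].
have tK : left_total K by move=> x; have [a fa] := sf (phi x); exists a.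
have [M [cM tM MK minM]] := exists_minimal_left_total cA cK tK.
have [psi [cpsi Mpsi]] := minimal_left_total_graph sX cA hA cM tM minM.
by exists psi; split => //; apply/funext => x; rewrite /= -(MK _ (Mpsi x)).
Qed.

(** * Stonean covers of Stone spaces *)

Definition is_ultrafilter (T : Type) (F : set_system T) : Prop :=
  [/\ (forall P Q, F (P `&` Q) <-> F P /\ F Q), ~ F set0, F setT &
      forall P, F P \/ F (~` P)].

(* The Stone-Cech compactification of the discrete space T. *)
Definition ultra_space (T : Type) := {F : set_system T | is_ultrafilter F}.

HB.instance Definition _ (T : Type) := gen_eqMixin (ultra_space T).
HB.instance Definition _ (T : Type) := gen_choiceMixin (ultra_space T).

Definition ultra_basic (T : Type) (P : set T) : set (ultra_space T) :=
  [set F | sval F P].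

Lemma ultra_basic_cover (T : Type) :
  \bigcup_(i in [set: set T]) ultra_basic i = setT.
Proof.
rewrite predeqE => F; split => // _; exists setT => //.
by case: F => F [].
Qed.

Lemma ultra_basicI (T : Type) (P Q : set T) :
  ultra_basic (P `&` Q) = ultra_basic P `&` ultra_basic Q.
Proof. by rewrite predeqE => -[F [FI _ _ _]] /=; exact: FI. Qed.

Lemma ultra_basic_join (T : Type) (i j : set T) (t : ultra_space T) :
  [set: set T] i -> [set: set T] j -> ultra_basic i t -> ultra_basic j t ->
  exists k, [/\ [set: set T] k, ultra_basic k t &
    ultra_basic k `<=` ultra_basic i `&` ultra_basic j].
Proof.
by move=> _ _ it jt; exists (i `&` j); rewrite ultra_basicI; split.
Qed.

HB.instance Definition _ (T : Type) :=
  isBaseTopological.Build (ultra_space T) (@ultra_basic_cover T)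
    (@ultra_basic_join T).

Section UltraSpace.
Variable T : Type.
Implicit Types (F G : ultra_space T) (P Q : set T).

Lemma ultra_basic_open P : open (ultra_basic P).
Proof. by exists [set P]; rewrite ?bigcup_set1. Qed.

Lemma ultra_nbhsP F (N : set (ultra_space T)) :
  nbhs F N <-> exists P, sval F P /\ ultra_basic P `<=` N.
Proof.
split.
  rewrite nbhsE => -[U [[D _ DU] UF] UN]; move: UF; rewrite -DU => -[P DP FP].
  by exists P; split => // G GP; apply: UN; rewrite -DU; exists P.
move=> [P [FP PN]]; apply: (filterS PN); apply: open_nbhs_nbhs.
by split => //; exact: ultra_basic_open.
Qed.

Lemma ultra_basicC P : ultra_basic (~` P) = ~` ultra_basic P.
Proof.
rewrite predeqE => -[F uF] /=; have [FI F0 _ FC] := uF.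
split; last by case: (FC P).
by move=> FnP FP; apply: F0; rewrite -(setICr P); apply/FI.
Qed.

Lemma ultra_basic0 : ultra_basic (@set0 T) = set0.
Proof. by rewrite predeqE => -[F uF] /=; have [_ F0 _ _] := uF. Qed.

Lemma ultra_basicT : ultra_basic (@setT T) = setT.
Proof. by rewrite predeqE => -[F uF] /=; have [_ _ FT _] := uF. Qed.

Lemma ultrafilter_ex F P : sval F P -> exists x, P x.
Proof.
case: F => F [_ F0 _ _] /= FP; apply: contrapT => nP; apply: F0.
by rewrite (_ : set0 = P) // predeqE => x; split => // Px; apply: nP; exists x.
Qed.

Lemma ultra_compact : compact [set: ultra_space T].
Proof.
rewrite compact_ultra => U UU _.
pose F0 := [set P : set T | U (ultra_basic P)].
have uF0 : is_ultrafilter F0.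
  split.
  - move=> P Q; rewrite /F0 /= ultra_basicI; split; last by case; apply: filterI.
    by move=> H; split; apply: filterS H => x [].
  - by rewrite /F0 /= ultra_basic0; exact: filter_not_empty.
  - by rewrite /F0 /= ultra_basicT; exact: filterT.
  - by move=> P; rewrite /F0 /= ultra_basicC; exact: in_ultra_setVsetC.
exists (exist _ F0 uF0); split => // N /ultra_nbhsP [P [F0P PN]].
exact: filterS PN F0P.
Qed.

Lemma ultra_hausdorff : hausdorff_space (ultra_space T).
Proof.
rewrite open_hausdorff => F G FG.
have [P [FP nGP]] : exists P, sval F P /\ ~ sval G P.
  apply: contrapT => H; move/eqP: FG; apply.
  case: F G H => [F uF] [G uG] /= H.
  have [_ _ _ FC] := uF; have [GI G0 _ _] := uG.
  apply/eq_exist/seteqP; split => P.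
    by move=> FP; apply: contrapT => nGP; apply: H; exists P.
  move=> GP; apply: contrapT => nFP; apply: G0.
  have [//|FnP] := FC P; rewrite -(setICr P); apply/GI; split => //.
  by apply: contrapT => nGnP; apply: H; exists (~` P).
exists (ultra_basic P, ultra_basic (~` P)) => /=.
  by rewrite ultra_basicC !inE.
split; [exact: ultra_basic_open | exact: ultra_basic_open |].
by rewrite -ultra_basicI setICr ultra_basic0.
Qed.

Definition principal_ultra (a : T) : ultra_space T.
Proof.
exists (principal_filter a); split.
- move=> P Q; split; first by move=> H; split => x /H [].
  by move=> [HP HQ] x xa; split; [exact: HP | exact: HQ].
- by move=> /(_ a erefl).
- by [].
- by move=> P; have [Pa|nPa] := pselect (P a); [left|right] => x ->.
Defined.

Lemma principal_ultraE (a : T) P : sval (principal_ultra a) P <-> P a.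
Proof. exact: principal_filterP. Qed.

(* The closure of an open set O is the basic clopen set of the points a
   whose principal ultrafilter lies in O. *)
Lemma ultra_extremally_disconnected (O : set (ultra_space T)) :
  open O -> open (closure O).
Proof.
move=> oO; pose E := [set a | O (principal_ultra a)].
suff -> : closure O = ultra_basic E by exact: ultra_basic_open.
have meetE F P : sval F P -> sval F E -> exists a, (P `&` E) a.
  move=> FP FE; apply: (ultrafilter_ex (F := F)).
  by case: (svalP F) => FI _ _ _; apply/FI.
rewrite predeqE => F; split => [clF|FE N /ultra_nbhsP [P [FP PN]]]; last first.
  have [a [Pa Ea]] := meetE F P FP FE.
  by exists (principal_ultra a); split => //; apply/PN/principal_ultraE.
apply: contrapT => nE.
have FnE : sval F (~` E) by case: (svalP F) => _ _ _ /(_ E) [].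
have [G [OG GnE]] :=
  clF _ ((ultra_nbhsP _ _).2 (ex_intro _ _ (conj FnE (@subset_refl _ _)))).
have /ultra_nbhsP [P [GP PO]] : nbhs G O by move: oO; rewrite openE; apply.
have [a [Pa nEa]] : exists a, (P `&` ~` E) a.
  by apply: (ultrafilter_ex (F := G)); case: (svalP G) => GI _ _ _; apply/GI.
by apply: nEa; apply/PO/principal_ultraE.
Qed.

Lemma ultra_stonean : stonean_space (ultra_space T).
Proof.
split; [exact: ultra_compact | exact: ultra_hausdorff |
  exact: ultra_extremally_disconnected].
Qed.

End UltraSpace.

Section UltraLimit.
Variable A : topologicalType.
Hypothesis sA : stone_space A.

Let cA : compact [set: A]. Proof. by case: sA. Qed.
Let hA : hausdorff_space A. Proof. by case: sA. Qed.
Let zA : zero_dim A. Proof. by case: sA. Qed.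

Lemma ultra_cvg_ex (F : ultra_space A) : exists a : A, sval F --> a.
Proof.
case: F => F uF /=; have [FI F0 FT FC] := uF.
have PF : ProperFilter F.
  split => //; split => // [P Q FP FQ|P Q PQ FP]; first exact/FI.
  by move: FP; rewrite -(setIidl PQ) => /FI [].
have [a [_ cla]] := cA PF (@filterT _ _ PF).
exists a => N nN; apply: contrapT => nFN.
have [//|FnN] := FC N.
by have [x [nNx Nx]] := cla _ _ FnN nN.
Qed.

Definition ultra_lim (F : ultra_space A) : A := projT1 (cid (ultra_cvg_ex F)).

Lemma ultra_limP (F : ultra_space A) : sval F --> ultra_lim F.
Proof. exact: projT2 (cid (ultra_cvg_ex F)). Qed.

Lemma ultra_lim_closed (F : ultra_space A) (C : set A) :
  closed C -> sval F C -> C (ultra_lim F).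
Proof.
move=> cC FC; apply: cC => N nN; apply: contrapT => nCN.
have FN : sval F N := ultra_limP nN.
case: (svalP F) => FI F0 _ _; apply: F0.
rewrite (_ : set0 = C `&` N); first exact/FI.
by rewrite predeqE => x; split => // -[Cx Nx]; apply: nCN; exists x.
Qed.

Lemma ultra_lim_continuous : continuous ultra_lim.
Proof.
move=> F N; rewrite nbhsE => -[N' [oN' N'F] N'N].
have [C [[oC cC] CF CN']] := zA oN' N'F.
apply/ultra_nbhsP; exists C; split.
  exact: ultra_limP (open_nbhs_nbhs (conj oC CF)).
by move=> G GC; apply: N'N; apply: CN'; exact: ultra_lim_closed.
Qed.

Lemma ultra_lim_principal (a : A) : ultra_lim (principal_ultra a) = a.
Proof.
apply: esym; apply: hA => U V nU nV.
exists a; split; first exact: nbhs_singleton nU.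
exact/principal_ultraE/(ultra_limP nV).
Qed.

End UltraLimit.

Lemma stonean_cover (A : topologicalType) : stone_space A ->
  exists (X : topologicalType) (p : X -> A),
    [/\ stonean_space X, continuous p & forall a, exists x, p x = a].
Proof.
move=> sA; exists (ultra_space A), (ultra_lim sA); split.
- exact: ultra_stonean.
- exact: ultra_lim_continuous.
- by move=> a; exists (principal_ultra a); exact: ultra_lim_principal.
Qed.

(** * Stone topological algebras *)

Definition eval_op (Om : tsig) (A : topAlg Om) n : Om n * pow_space A n -> A :=
  fun p => op A n p.1 p.2.
Arguments eval_op {Om} A n.

Section Algebras.
Variable Om : tsig.

Lemma prodAlg_stone (I : Type) (A : I -> topAlg Om) :
  (forall i, is_stone (A i)) -> is_stone (prodAlg A).
Proof.
move=> sA; split; first by apply: prod_stone => i; case: (sA i).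
move=> n; apply: continuous_prod_topology => i.
change (continuous (eval_op (A i) n \o (fun p : Om n * pow_space (prodAlg A) n =>
  (p.1, (fun f : prod_topology A => f i) \o p.2)))).
move=> x; apply: continuous_comp; last exact: (sA i).2.
apply: continuous_map_snd; apply: continuous_pow_map.
exact: (@prod_coord_continuous I (fun i => A i) i).
Qed.

Lemma subAlg_stone (A : topAlg Om) (S : set A) (HS : op_closed S) :
  is_stone A -> closed S -> is_stone (subAlg HS).
Proof.
move=> [sA cA] cS; split.
  apply: initial_stone sA _; first exact: val_inj.
  rewrite (_ : range _ = S) // predeqE => x.
  split; first by move=> [y _ <-]; exact: set_valP.
  by move=> Sx; exists (SigSub (mem_set Sx)).
move=> n; apply: (@continuous_comp_initial _ _ A (@set_val A S)).
change (continuous (eval_op A n \o (fun p : Om n * pow_space (subAlg HS) n =>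
  (p.1, (@set_val A S) \o p.2)))).
move=> x; apply: continuous_comp; last exact: cA.
apply: continuous_map_snd; apply: continuous_pow_map.
exact: initial_continuous.
Qed.

Lemma hom_range_op_closed (A B : topAlg Om) (f : A -> B) :
  is_hom f -> op_closed (range f).
Proof.
move=> hf n w b Rb.
have [a Ha] := choice (fun k => let: ex_intro2 a _ e := Rb k in ex_intro _ a e).
by exists (op A n w a) => //; rewrite hf; congr (op B n w); apply/funext.
Qed.

Lemma gen_sub_op_closed (A : topAlg Om) (G : set A) : op_closed (gen_sub G).
Proof. by move=> n w a Ga S SP; apply: SP.1 => k; exact: Ga k S SP. Qed.

Lemma gen_sub_min (A : topAlg Om) (G S : set A) :
  op_closed S -> G `<=` S -> gen_sub G `<=` S.
Proof. by move=> HS GS x; apply. Qed.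

Lemma sub_gen_sub (A : topAlg Om) (G : set A) : G `<=` gen_sub G.
Proof. by move=> x Gx S [_ GS]; exact: GS. Qed.

Lemma closure_op_closed (A : topAlg Om) (D : set A) :
  (forall n, continuous (eval_op A n)) -> op_closed D -> op_closed (closure D).
Proof.
move=> cA HD n w a /closure_pow_box cla.
have cw : continuous (fun b : pow_space A n => op A n w b).
  by move=> b; apply: (@continuous_comp _ _ _ (fun b => (w, b)) (eval_op A n));
    [exact: pair_cst_continuous | exact: cA].
apply: closureS (closure_image_continuous cw (ex_intro2 _ _ a cla erefl)).
by move=> _ [b Db <-]; exact: HD.
Qed.

Lemma eq_continuous_hom (A F : topAlg Om) (G : set F) (h1 h2 : F -> A) :
  closure (gen_sub G) = setT -> hausdorff_space A ->
  continuous h1 -> continuous h2 -> is_hom h1 -> is_hom h2 ->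
  (forall z, G z -> h1 z = h2 z) -> h1 = h2.
Proof.
move=> dense hA c1 c2 hh1 hh2 E12; apply/funext => z.
have cE := closed_equalizer hA c1 c2.
have oE : op_closed [set z | h1 z = h2 z].
  move=> n w a Ea; rewrite /= hh1 hh2; congr (op A n w).
  by apply/funext => k; exact: Ea.
suff : closure [set z | h1 z = h2 z] z by rewrite -((closure_id _).1 cE).
by apply: (closureS (gen_sub_min oE E12)); rewrite dense.
Qed.

End Algebras.

(** * Preservation of pseudoidentities *)

Section Satisfaction.
Variables (Om : tsig) (e : stonean_pseudoid Om).

Lemma satisfies_prodAlg (I : Type) (A : I -> topAlg Om) :
  (forall i, satisfies (A i) e) -> satisfies (prodAlg A) e.
Proof.
move=> sA phi cphi h ch hh hphi; apply: functional_extensionality_dep => i.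
have proj_i := @prod_coord_continuous I (fun i => A i) i.
apply: (sA i (fun x => phi x i) _ (fun z => h z i)).
- by move=> x; apply: (@continuous_comp _ (prod_topology A) _ phi (fun f => f i));
    [exact: cphi | exact: proj_i].
- by move=> z; apply: (@continuous_comp _ (prod_topology A) _ h (fun f => f i));
    [exact: ch | exact: proj_i].
- by move=> n w a /=; rewrite hh.
- by apply/funext => x /=; rewrite -hphi.
Qed.

Lemma satisfies_subAlg (A : topAlg Om) (S : set A) (HS : op_closed S) :
  satisfies A e -> satisfies (subAlg HS) e.
Proof.
move=> sA phi cphi h ch hh hphi; apply: val_inj.
apply: (sA (set_val \o phi) _ (set_val \o h)).
- by move=> x; apply: continuous_comp; [exact: cphi | exact: initial_continuous].
- by move=> z; apply: continuous_comp; [exact: ch | exact: initial_continuous].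
- by move=> n w a /=; rewrite hh.
- by rewrite -hphi.
Qed.

Lemma satisfies_image (A B : topAlg Om) (f : A -> B) :
  is_stone A -> is_stone B -> continuous f -> is_hom f ->
  (forall b, exists a, f a = b) -> satisfies A e -> satisfies B e.
Proof.
move=> sA sB cf hf sf satA phi cphi h ch hh hphi.
have [[[cA hA _] _] [[_ hB _] _]] := (sA, sB).
have [psi [cpsi fpsi]] := gleason_lift (pi_space_stonean e) cA hA hB cf sf cphi.
have [_ _ _ univ] := pi_freeP e.
have [h' [[ch' hh' h'psi] _]] := univ A psi sA cpsi.
have [g [_ gu]] := univ B phi sB cphi.
have <- : g = h by apply: gu.
have -> : g = f \o h'.
  apply: gu; split; last by rewrite -compA h'psi.
    by move=> z; apply: continuous_comp; [exact: ch' | exact: cf].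
  by move=> n w a /=; rewrite hh' hf.
by rewrite /= (satA psi cpsi h' ch' hh' h'psi).
Qed.

End Satisfaction.

Lemma equational_stone_variety (Om : tsig) (V : topAlg Om -> Prop)
    (Sigma : stonean_pseudoid Om -> Prop) :
  (forall A, V A <-> is_stone A /\ forall e, Sigma e -> satisfies A e) ->
  stone_variety V.
Proof.
move=> HV; split.
- by move=> A /HV [].
- exists (prodAlg (fun v : void => match v with end)); apply/HV.
  by split; [apply: prodAlg_stone | move=> e _; apply: satisfies_prodAlg]; case.
- move=> A B f /HV [sA satA] sB cf hf sf; apply/HV; split => // e Se.
  exact: satisfies_image sA sB cf hf sf (satA e Se).
- move=> A S HS /HV [sA satA] cS; apply/HV; split; first exact: subAlg_stone.
  by move=> e Se; apply: satisfies_subAlg; exact: satA.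
- move=> I A VA; apply/HV; split.
    by apply: prodAlg_stone => i; have /HV [] := VA i.
  by move=> e Se; apply: satisfies_prodAlg => i; have /HV [_] := VA i; apply.
Qed.

(** * Free Stone algebras *)

Section FreeStoneAlgebra.
Variables (Om : tsig) (X : topologicalType).

Inductive term : Type :=
  | tvar of X
  | tapp (n : nat) of Om n & ('I_n -> term).

Fixpoint term_eval (S : topAlg Om) (phi : X -> S) (t : term) : S :=
  match t with
  | tvar x => phi x
  | tapp n w ts => op S n w (fun k => term_eval phi (ts k))
  end.

Record coded_alg := CodedAlg {
  code_set : set (set (set term));
  code_top : Topological.axioms_ (set_type code_set);
  code_op : forall n, Om n -> ('I_n -> set_type code_set) -> set_type code_set;
  code_gen : X -> set_type code_set }.

Definition coded_topAlg (d : coded_alg) : topAlg Om :=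
  @TopAlg Om (Topological.Pack (code_top d)) (@code_op d).

Definition coded_gen (d : coded_alg) : X -> coded_topAlg d := code_gen d.

Section Coding.
Variables (S : topAlg Om) (phi : X -> S).
Hypotheses (sS : is_stone S) (cphi : continuous phi).

Let ev := term_eval phi.

Let ev_op_closed : op_closed (range ev).
Proof.
move=> n w a Ra.
have [ts Hts] := choice (fun k => let: ex_intro2 t _ e := Ra k in ex_intro _ t e).
by exists (tapp w ts) => //=; congr (op S n w); apply/funext.
Qed.

Let Z := subAlg (closure_op_closed sS.2 ev_op_closed).

Let sZ : is_stone Z := subAlg_stone _ sS (@closed_closure _ _).

Let code (s : S) : set (set term) :=
  [set Pt | exists U, nbhs s U /\ ev @^-1` U `<=` Pt].

Let code_inj (s t : S) : closure (range ev) t -> code s = code t -> s = t.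
Proof.
move=> clt E; have [[_ hS _] _] := sS; apply: hS => U V nU nV.
have : code s (ev @^-1` U) by exists U; split.
rewrite E => -[W [nW WU]].
have [r [[tau _ <-] [Wr Vr]]] := clt _ (filterI nW nV).
by exists (ev tau); split => //; exact: WU.
Qed.

Let C := [set code (set_val z) | z in [set: Z]].
Let W := set_type C.

Let encode (z : Z) : W := SigSub (mem_set (ex_intro2 _ _ z I erefl : C _)).

Let decode_ex (w : W) : exists z : Z, encode z = w.
Proof. by have [z _ e] := set_valP w; exists z; apply: val_inj. Qed.

Let decode (w : W) : Z := projT1 (cid (decode_ex w)).

Let encodeK : cancel encode decode.
Proof.
move=> z; apply: val_inj; apply: code_inj; first exact: set_valP.
by have := congr1 val (projT2 (cid (decode_ex (encode z)))).
Qed.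

Let decodeK : cancel decode encode.
Proof. by move=> w; exact: projT2 (cid (decode_ex w)). Qed.

Definition coding : coded_alg :=
  @CodedAlg C (Topological.class (initial_topology decode))
    (fun n w a => encode (op Z n w (decode \o a)))
    (fun x => encode (SigSub (mem_set (subset_closure
      (ex_intro2 _ _ (tvar x) I erefl : range ev (phi x)))))).

Let decode_continuous : continuous (decode : coded_topAlg coding -> Z).
Proof. exact: initial_continuous. Qed.

Let encode_continuous : continuous (encode : Z -> coded_topAlg coding).
Proof.
apply: (@continuous_comp_initial _ _ Z decode).
rewrite (_ : decode \o encode = id); last exact/funext/encodeK.
by move=> z; exact: cvg_id.
Qed.

Lemma coding_stone : is_stone (coded_topAlg coding).
Proof.
have [sZ' cZop] := sZ; split.
  apply: initial_stone => //; first exact: can_inj decodeK.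
  rewrite (_ : range decode = setT); first exact: closedT.
  by rewrite predeqE => z; split => // _; exists (encode z).
move=> n; change (continuous ((encode : Z -> coded_topAlg coding) \o
  eval_op Z n \o (fun p : Om n * pow_space (coded_topAlg coding) n =>
  ((p.1, decode \o p.2) : Om n * pow_space Z n)))).
move=> p; apply: continuous_comp.
  by apply: continuous_map_snd; apply: continuous_pow_map.
by apply: continuous_comp; [exact: cZop | exact: encode_continuous].
Qed.

Lemma coding_gen_continuous : continuous (coded_gen coding).
Proof.
apply: (@continuous_comp_initial _ _ Z decode).
apply: (@continuous_comp_initial _ _ S (@set_val S _)).
by rewrite (_ : _ \o _ = phi) //; apply/funext => x /=; rewrite encodeK.
Qed.

Lemma coding_hom : exists k : coded_topAlg coding -> S,
  [/\ continuous k, is_hom k & k \o coded_gen coding = phi].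
Proof.
exists (fun w => set_val (decode w)); split.
- by move=> w; apply: continuous_comp; [exact: decode_continuous |
    exact: initial_continuous].
- by move=> n w a /=; rewrite encodeK.
- by apply/funext => x /=; rewrite encodeK.
Qed.

End Coding.

Definition stone_coding :=
  {d : coded_alg | is_stone (coded_topAlg d) /\ continuous (coded_gen d)}.

Definition coding_prod : topAlg Om :=
  prodAlg (fun i : stone_coding => coded_topAlg (sval i)).

Definition coding_diag (x : X) : coding_prod := fun i => coded_gen (sval i) x.

Lemma coding_prod_stone : is_stone coding_prod.
Proof. by apply: prodAlg_stone => i; case: (svalP i). Qed.

Lemma coding_diag_continuous : continuous coding_diag.
Proof. by apply: continuous_prod_topology => i; case: (svalP i). Qed.

Definition free_alg : topAlg Om :=
  subAlg (closure_op_closed coding_prod_stone.2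
    (@gen_sub_op_closed _ _ (range coding_diag))).

Definition free_gen (x : X) : free_alg :=
  SigSub (mem_set (subset_closure
    (@sub_gen_sub _ _ (range coding_diag) _ (ex_intro2 _ _ x I erefl)))).

Lemma free_alg_stone : is_stone free_alg.
Proof. exact: subAlg_stone coding_prod_stone (@closed_closure _ _). Qed.

Lemma free_gen_continuous : continuous free_gen.
Proof.
apply: (@continuous_comp_initial _ _ coding_prod (@set_val _ _)).
exact: coding_diag_continuous.
Qed.

Lemma free_gen_dense : closure (gen_sub (range free_gen)) = setT.
Proof.
pose T := [set y : coding_prod |
  exists z : free_alg, set_val z = y /\ gen_sub (range free_gen) z].
have HT : op_closed T.
  move=> n w a Ta; have [zs Hzs] := choice Ta.
  exists (op free_alg n w zs); split.
    by congr (op coding_prod n w); apply/funext => k; have [] := Hzs k.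
  by apply: gen_sub_op_closed => k; have [] := Hzs k.
have GT : gen_sub (range coding_diag) `<=` T.
  apply: (gen_sub_min HT) => _ [x _ <-].
  by exists (free_gen x); split => //; apply: sub_gen_sub; exists x.
rewrite predeqE => z; split => // _ N /initial_nbhsP [Op [oO Oz ON]].
have [y [Gy Oy]] := set_valP z _ (open_nbhs_nbhs (conj oO Oz)).
have [z' [Ez' Gz']] := GT _ Gy.
by exists z'; split => //; apply: ON; rewrite /preimage /= Ez'.
Qed.

Lemma free_gen_free : is_free_stone free_gen.
Proof.
split; [exact: free_alg_stone | exact: free_gen_continuous |
  exact: free_gen_dense |] => S phi sS cphi.
have [k [ck hk kphi]] := coding_hom phi sS.
pose i : stone_coding := exist _ (coding phi sS)
  (conj (coding_stone phi sS) (@coding_gen_continuous _ phi sS cphi)).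
pose hi (z : free_alg) := k (set_val z i).
have chi : continuous hi.
  move=> z; apply: (@continuous_comp _ _ _ (fun z : free_alg => set_val z i) k);
    last exact: ck.
  apply: (@continuous_comp _ coding_prod _ (@set_val _ _) (fun f => f i)).
    exact: initial_continuous.
  exact: (@prod_coord_continuous _
    (fun i : stone_coding => coded_topAlg (sval i))).
have hhi : is_hom hi by move=> n w a; rewrite /hi /= hk.
have hiphi : hi \o free_gen = phi by rewrite -kphi.
exists hi; split => // h' [ch' hh' h'phi].
apply: (eq_continuous_hom free_gen_dense) => //; first by have [[]] := sS.
by move=> _ [x _ <-]; rewrite -[hi _]/((hi \o free_gen) x) hiphi -h'phi.
Qed.

End FreeStoneAlgebra.

Lemma free_stone_exists (Om : tsig) (X : topologicalType) :
  exists (F : topAlg Om) (iota : X -> F), is_free_stone iota.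
Proof. by exists (free_alg Om X), (@free_gen Om X); exact: free_gen_free. Qed.

(** * Stone varieties are defined by pseudoidentities *)

Section FactorThroughRange.
Variables (Om : tsig) (F P A : topAlg Om) (G : F -> P) (h : F -> A).
Hypotheses (cF : compact [set: F]) (hP : hausdorff_space P)
  (cG : continuous G) (hG : is_hom G) (ch : continuous h) (hh : is_hom h)
  (kerGh : forall z1 z2, G z1 = G z2 -> h z1 = h z2).

Let R := subAlg (hom_range_op_closed hG).

Lemma factor_through_range : exists k : R -> A,
  [/\ continuous k, is_hom k & forall s z, set_val s = G z -> k s = h z].
Proof.
have exz (s : R) : exists z, G z = set_val s.
  by have [z _ e] := set_valP s; exists z.
pose k (s : R) := h (projT1 (cid (exz s))).
have kP s z : set_val s = G z -> k s = h z.
  by move=> E; apply: kerGh; rewrite (projT2 (cid (exz s))).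
exists k; split => //.
  apply/continuous_closedP => C cC.
  pose G' (z : F) : R :=
    SigSub (mem_set (ex_intro2 _ _ z I erefl : range G (G z))).
  have -> : k @^-1` C = G' @` (h @^-1` C).
    rewrite predeqE => s; split => [Cs|[z Cz <-]]; last first.
      by rewrite /preimage /= (kP _ z).
    exists (projT1 (cid (exz s))) => //.
    by apply: val_inj; exact: (projT2 (cid (exz s))).
  apply: compact_closed.
    by apply: initial_hausdorff hP; exact: val_inj.
  apply: continuous_compact.
    by apply: continuous_subspaceT; apply: (@continuous_comp_initial _ _ P).
  apply: (subclosed_compact _ cF) => //.
  exact: (continuous_closedP _).1 ch _ cC.
move=> n w s; pose zs j := projT1 (cid (exz (s j))).
rewrite (kP _ (op F n w zs)) ?hh // hG; congr (op P n w); apply/funext => j /=.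
exact: esym (projT2 (cid (exz (s j)))).
Qed.

End FactorThroughRange.

Definition valid_in (Om : tsig) (V : topAlg Om -> Prop)
  (e : stonean_pseudoid Om) : Prop := forall B, V B -> satisfies B e.

Lemma separating_product (Om : tsig) (V : topAlg Om -> Prop)
    (X : topologicalType) (sX : stonean_space X) (F : topAlg Om)
    (iota : X -> F) (fr : is_free_stone iota) (A : topAlg Om) (p : X -> A)
    (h : F -> A) :
  (forall (I : Type) (B : I -> topAlg Om),
     (forall i, V (B i)) -> V (prodAlg B)) ->
  (forall e, valid_in V e -> satisfies A e) ->
  continuous p -> continuous h -> is_hom h -> h \o iota = p ->
  exists (P : topAlg Om) (G : F -> P),
    [/\ V P, continuous G, is_hom G & forall z1 z2, G z1 = G z2 -> h z1 = h z2].
Proof.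
move=> Vprod satA cp ch hh hiota.
pose I := {uv : F * F | h uv.1 <> h uv.2}.
have exB (i : I) : exists B : topAlg Om, V B /\ exists g : F -> B,
    [/\ continuous g, is_hom g & g (sval i).1 <> g (sval i).2].
  case: i => -[u v] /= huv; apply: contrapT => nB; apply: huv.
  apply: (satA (StoneanPseudoid sX fr u v) _ p cp h ch hh hiota) => B VB.
  move=> phi cphi g cg hg gphi; apply: contrapT => ng; apply: nB.
  by exists B; split => //; exists g.
pose B i := projT1 (cid (exB i)).
have gex i := (projT2 (cid (exB i))).2.
pose g i := projT1 (cid (gex i)).
have gP i :
    [/\ continuous (g i), is_hom (g i) & g i (sval i).1 <> g i (sval i).2].
  exact: projT2 (cid (gex i)).
exists (prodAlg B), (fun z i => g i z); split.
- by apply: Vprod => i; exact: (projT2 (cid (exB i))).1.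
- by apply: continuous_prod_topology => i; have [] := gP i.
- move=> n w a; apply: functional_extensionality_dep => i /=.
  by have [_ -> _] := gP i.
- move=> z1 z2 E; apply: contrapT => ne.
  have [_ _] := gP (exist _ (z1, z2) ne); apply => /=.
  by have := congr1 (fun f => f (exist _ (z1, z2) ne)) E.
Qed.

Lemma models_in_stone_variety (Om : tsig) (V : topAlg Om -> Prop)
    (A : topAlg Om) :
  stone_variety V -> is_stone A -> (forall e, valid_in V e -> satisfies A e) ->
  V A.
Proof.
move=> [Vs _ Vim Vsub Vprod] sA satA.
have [X [p [sX cp sp]]] := stonean_cover sA.1.
have [F [iota fr]] := free_stone_exists Om X.
have [[[cF _ _] _] _ _ univ] := fr.
have [h [[ch hh hiota] _]] := univ A p sA cp.
have [P [G [VP cG hG kerGh]]] :=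
  separating_product sX fr Vprod satA cp ch hh hiota.
have [[_ hP _] _] := Vs _ VP.
have VR : V (subAlg (hom_range_op_closed hG)).
  by apply: Vsub => //; apply: closed_range_compact.
have [k [ck hk kG]] := factor_through_range cF hP cG hG ch hh kerGh.
apply: (Vim _ A k VR sA ck hk) => a.
have [x <-] := sp a.
exists (SigSub (mem_set (ex_intro2 _ _ (iota x) I erefl : range G (G (iota x))))).
by rewrite (kG _ (iota x)) // -hiota.
Qed.

Theorem theorem5p19 (Om : tsig) (V : topAlg Om -> Prop) :
  (forall A, V A -> is_stone A) ->
  (stone_variety V <->
   exists Sigma : stonean_pseudoid Om -> Prop,
     forall A : topAlg Om,
       V A <-> (is_stone A /\ forall e, Sigma e -> satisfies A e)).
Proof.
move=> Vs; split; last by move=> [Sigma HV]; exact: equational_stone_variety HV.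
move=> VV; exists (valid_in V) => A; split.
  by move=> VA; split; [exact: Vs | move=> e; apply].
by move=> [sA satA]; exact: models_in_stone_variety.
Qed.
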